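(* Let $f:\mathbb{R}^n\to\mathbb{R}^n$ be locally Lipschitz, and let $V_1,V_2\in C^1(\mathbb{R}^n)$, continuous $N_1,N_2:\mathbb{R}^n\to[0,\infty)$, and continuous $h:[0,\infty)\to[0,\infty)$ with $h(0)=0$ and $\sup_{r>0}h(r)/r<\infty$ satisfy $\nabla V_1\cdot f\le -N_1$ and $\nabla V_2\cdot f\le -N_2+h(N_1)$ on $\mathbb{R}^n$. Assume every solution is defined and bounded on $[0,\infty)$ and that along every solution the maps $t\mapsto N_i(x(t))$ are uniformly continuous. Suppose $E:=\{x:N_1(x)=0,\ N_2(x)=0\}$ coincides with the equilibrium set $E_f:=\{x:f(x)=0\}$, and every equilibrium is Lyapunov stable. Then every solution converges to a single equilibrium in $E$ (its $\omega$-limit set is a singleton in $E$), and each equilibrium is semistable.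
   Context: A point $z$ is Lyapunov stable if for every neighborhood $U$ of $z$ there is a neighborhood $V\subset U$ of $z$ such that every solution starting in $V$ remains in $U$ for all $t\ge0$. An equilibrium $\bar x\in E_f$ is semistable if it is Lyapunov stable and there exists $\delta>0$ such that every solution with $\|x(0)-\bar x\|\le\delta$ converges to some (possibly different) Lyapunov stable equilibrium in $E_f$. *)

From HB Require Import structures.
From mathcomp Require Import all_boot all_order all_algebra.
From mathcomp Require Import all_classical all_reals all_analysis.
Set Implicit Arguments. Unset Strict Implicit. Unset Printing Implicit Defensive.
Import Order.TTheory GRing.Theory Num.Theory.
Import numFieldNormedType.Exports.
Local Open Scope classical_set_scope.
Local Open Scope ring_scope.

Section Defs.
Variables (R : realType) (n : nat).
Notation V := 'rV[R]_n.

Definition locally_lipschitz (f : V -> V) : Prop :=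
  forall x : V, exists2 r : R, 0 < r &
    exists L : R, forall y z : V, `|y - x| < r -> `|z - x| < r ->
      `|f y - f z| <= L * `|y - z|.

Definition C1 (W : V -> R) : Prop :=
  (forall x : V, differentiable W x) /\
  (forall v : V, continuous (fun x : V => 'D_v W x)).

Definition solution (f : V -> V) (x : R -> V) : Prop :=
  {within `[0, +oo[, continuous x} /\
  (forall t : R, 0 < t -> derivable x t 1 /\ 'D_1 x t = f (x t)).

Definition equilibria (f : V -> V) : set V := [set z | f z = 0].

Definition lyapunov_stable (f : V -> V) (z : V) : Prop :=
  forall U : set V, nbhs z U ->
    exists W : set V, [/\ nbhs z W, W `<=` U &
      forall x : R -> V, solution f x -> W (x 0) ->
        forall t : R, 0 <= t -> U (x t)].

Definition semistable (f : V -> V) (z : V) : Prop :=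
  [/\ z \in equilibria f, lyapunov_stable f z &
    exists2 d : R, 0 < d &
      forall x : R -> V, solution f x -> `|x 0 - z| <= d ->
        exists2 w : V, (w \in equilibria f /\ lyapunov_stable f w) &
          x t @[t --> +oo] --> w].

Definition omega_limit (x : R -> V) : set V :=
  [set p | exists2 s : nat -> R, s n @[n --> \oo] --> +oo &
                                 x (s n) @[n --> \oo] --> p].

Definition unif_cont_on_half_line (g : R -> R) : Prop :=
  forall e : R, 0 < e -> exists2 d : R, 0 < d &
    forall s t : R, 0 <= s -> 0 <= t -> `|s - t| < d -> `|g s - g t| < e.

End Defs.

From HB Require Import structures.
From mathcomp Require Import all_boot all_order all_algebra.
From mathcomp Require Import all_classical all_reals all_analysis.
From mathcomp Require Import lra.
Import Order.TTheory GRing.Theory Num.Theory.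
Import numFieldNormedType.Exports.
Local Open Scope classical_set_scope.
Local Open Scope ring_scope.

(* Along a bounded solution, [V1] and [V2 + M V1] (with [h r <= M r]) are
   Lyapunov functions whose derivatives are bounded by [- N1] and [- N2];
   Barbalat's lemma then drives [N1] and [N2] to [0], so every cluster point of
   the trajectory lies in [E], the equilibrium set.  Such a cluster point is
   Lyapunov stable, and stability of a point the trajectory comes arbitrarily
   close to forces convergence to it. *)

Section Barbalat.
Variables (R : realType) (g N : R -> R).
Hypothesis derive_g : forall t, 0 < t -> derivable g t 1 /\ 'D_1 g t <= - N t.

Lemma sub_le_of_derive_le [c s t : R] :
  0 < s -> s < t -> (forall u, s < u -> u < t -> c <= N u) ->
  g t - g s <= - (c * (t - s)).
Proof.
move=> s0 st Nc.
have gD : forall u, u \in `]s, t[ -> is_derive u 1 g ('D_1 g u).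
  move=> u; rewrite in_itv /= => /andP[su _].
  by apply: derivableP; exact: (derive_g _ (lt_trans s0 su)).1.
have gC : {within `[s, t], continuous g}.
  apply: derivable_within_continuous => u; rewrite in_itv /= => /andP[su _].
  exact: (derive_g _ (lt_le_trans s0 su)).1.
have [u /[!in_itv] /= /andP[su ut] ->] := MVT st gD gC.
rewrite -mulNr; apply: ler_wpM2r; first by rewrite subr_ge0 ltW.
apply: le_trans (derive_g _ (lt_trans s0 su)).2 _.
by rewrite lerN2 Nc.
Qed.

Hypothesis N_ge0 : forall t, 0 <= N t.

Lemma derive_le_nonincreasing [s t : R] : 0 < s -> s <= t -> g t <= g s.
Proof.
move=> s0; rewrite le_eqVlt => /predU1P[-> //|st].
have := sub_le_of_derive_le s0 st (fun u _ _ => N_ge0 u).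
by rewrite mul0r oppr0 subr_le0.
Qed.

Lemma barbalat : unif_cont_on_half_line N ->
  (exists B, forall t, 0 < t -> B <= g t) -> N t @[t --> +oo] --> 0.
Proof.
move=> Nu [B gB]; apply/cvgr0Pnorm_lt => e e0.
set S := [set - g t | t in [set t : R | 0 < t]].
have supS : has_sup S.
  split; first by exists (- g 1), 1 => //=.
  by exists (- B) => _ [t /= t0 <-]; rewrite lerN2 gB.
have [d d0 Nd] := Nu _ (divr_gt0 e0 (ltr0Sn _ 1)).
have ed0 : 0 < e / 2 * (d / 2) by rewrite !mulr_gt0.
have [_ [T /= T0 <-] supT] := sup_adherent ed0 supS.
exists T; split=> [|t Tt]; first exact: num_real.
rewrite ger0_norm // ltNge; apply/negP => eNt.
have t0 : 0 < t by exact: lt_trans T0 Tt.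
have tt' : t < t + d / 2 by rewrite ltrDl divr_gt0.
(* uniform continuity keeps [N >= e/2] on [t, t + d/2], so [g] drops by [e d/4] *)
have Nc : forall u, t < u -> u < t + d / 2 -> e / 2 <= N u.
  move=> u tu ut.
  have : `|N u - N t| < e / 2.
    apply: Nd; rewrite ?ltW //; first exact: lt_trans t0 tu.
    rewrite gtr0_norm ?subr_gt0 // ltrBlDl.
    by apply: lt_le_trans ut _; rewrite lerD2l; lra.
  rewrite ltr_norml => /andP[+ _]; lra.
have := sub_le_of_derive_le t0 tt' Nc; rewrite addrAC subrr add0r => drop.
have S_t' : S (- g (t + d / 2)) by exists (t + d / 2) => //=; exact: lt_trans t0 tt'.
have := sup_upper_bound supS S_t'.
have := derive_le_nonincreasing T0 (ltW Tt).
lra.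
Qed.

End Barbalat.

Lemma cluster_eq0 [R : realType] [T : topologicalType] [N : T -> R] [x : R -> T] [z : T] :
  continuous N -> N (x t) @[t --> +oo] --> 0 -> cluster (x t @[t --> +oo]) z ->
  N z = 0.
Proof.
move=> cN Nx0 clz; apply/eqP/negPn/negP => Nz0.
have e0 : 0 < `|N z| / 2 by rewrite divr_gt0 ?normr_gt0.
have [p [/= Np1 /= Np2]] := clz [set p | `|N p| < `|N z| / 2] _ ((cvgr0Pnorm_lt _).1 Nx0 _ e0)
  (cN z _ (nbhsx_ballx (N z) _ e0)).
move: Np2; rewrite /ball /=.
by have := ler_normD (N z - N p) (N p); rewrite subrK; lra.
Qed.

Lemma compact_norm_le [R : realType] (n : nat) (M : R) :
  compact [set p : 'rV[R]_n | `|p| <= M].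
Proof.
apply: bounded_closed_compact.
  exists M; split; first exact: num_real.
  by move=> M' MM' p /= pM; apply: le_trans pM (ltW MM').
exact: (preimage_closed (fun p _ => @norm_continuous _ _ p)) (@closed_le R M).
Qed.

Lemma continuous_bounded_below [R : realType] [n : nat] [W : 'rV[R]_n -> R] (M : R) :
  continuous W -> exists B, forall p, `|p| <= M -> B <= W p.
Proof.
move=> cW.
have [B [_ WB]] := compact_bounded
  (continuous_compact (continuous_subspaceT cW) (compact_norm_le n M)).
exists (- (B + 1)) => p pM.
have : `|W p| <= B + 1 by apply: WB; [lra | exists p].
by rewrite ler_norml => /andP[].
Qed.

Lemma derive1_shift [R : realType] [n : nat] (x : R -> 'rV[R]_n) (a s : R) :
  derivable (fun u => x (u + a)) s 1 = derivable x (s + a) 1 /\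
  'D_1 (fun u => x (u + a)) s = 'D_1 x (s + a).
Proof.
have E : (fun h : R => h^-1 *: (((fun u => x (u + a)) \o shift s) (h *: 1) - x (s + a)))
  = (fun h => h^-1 *: ((x \o shift (s + a)) (h *: 1) - x (s + a))).
  by apply: funext => h; rewrite /= addrA.
by rewrite /derivable /derive E.
Qed.

Lemma derive1_comp_differentiable [R : realType] [n : nat] [W : 'rV[R]_n -> R]
    [x : R -> 'rV[R]_n] [t : R] :
  (forall p, differentiable W p) -> derivable x t 1 ->
  derivable (W \o x) t 1 /\ 'D_1 (W \o x) t = 'D_('D_1 x t) W (x t).
Proof.
move=> dW /[dup] dx /derivable1_diffP dx'.
have dWx : differentiable (W \o x) t by apply: differentiable_comp.
split; first exact/derivable1_diffP.
by rewrite deriveE // diff_comp // deriveE //= deriveE.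
Qed.

Section Trajectories.
Context {R : realType} {n : nat} {f : 'rV[R]_n -> 'rV[R]_n}.
Implicit Types (x : R -> 'rV[R]_n) (z : 'rV[R]_n).

Lemma solution_shift [x] [a : R] : solution f x -> 0 < a -> solution f (fun u => x (u + a)).
Proof.
move=> [_ xD] a0; split=> [|s s0].
  apply: continuous_in_subspaceT => s; rewrite inE /= in_itv /= andbT => s0.
  apply: continuous_comp; first exact: cvgD cvg_id (cvg_cst _).
  apply/differentiable_continuous/derivable1_diffP.
  by apply: (xD _ _).1; rewrite ltr_wpDl.
have [derivable_shift ->] := derive1_shift x a s.
by rewrite derivable_shift; apply: xD; rewrite addr_gt0.
Qed.

Lemma lyapunov_cvg0 [W N : 'rV[R]_n -> R] [x] :
  (forall p, differentiable W p) -> (forall p, 'D_(f p) W p <= - N p) ->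
  (forall p, 0 <= N p) -> solution f x ->
  (exists M, forall t, 0 <= t -> `|x t| <= M) ->
  unif_cont_on_half_line (fun t => N (x t)) -> N (x t) @[t --> +oo] --> 0.
Proof.
move=> dW WN N0 [_ xD] [M xM] Nu.
apply: (@barbalat _ (W \o x)) => // [t t0|].
  have [xD1 xD2] := xD t t0.
  have [WxD1 ->] := derive1_comp_differentiable dW xD1.
  by rewrite xD2.
have [B WB] := continuous_bounded_below M (fun p => differentiable_continuous (dW p)).
by exists B => t t0; apply/WB/xM/ltW.
Qed.

Lemma bounded_cluster [x] : (exists M, forall t, 0 <= t -> `|x t| <= M) ->
  exists z, cluster (x t @[t --> +oo]) z.
Proof.
move=> [M xM].
have [|z [_ clz]] := compact_norm_le n M (x t @[t --> +oo]) _.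
  by exists 0; split=> [|t t0]; [exact: num_real | exact/xM/ltW].
by exists z.
Qed.

(* The trajectory enters every stability neighbourhood [W] of [z] at some
   time [t0]; the shifted solution starting there then stays in [U]. *)
Lemma stable_cluster_cvg [x z] : solution f x -> lyapunov_stable f z ->
  cluster (x t @[t --> +oo]) z -> x t @[t --> +oo] --> z.
Proof.
move=> sx stz clz U /stz [W [Wz _ WU]].
have : (x t @[t --> +oo]) [set p | exists2 t, 0 < t & p = x t].
  by exists 0; split=> [|t t0]; [exact: num_real | exists t].
move=> /(clz _ _)/(_ Wz) [_ [[t0 t00 ->] Wxt0]].
exists t0; split=> [|t tt0]; first exact: num_real.
have := WU _ (solution_shift sx t00); rewrite add0r => /(_ Wxt0 (t - t0)).
by rewrite subrK; apply; rewrite subr_ge0 ltW.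
Qed.

Lemma omega_limit_cvg [x z] : x t @[t --> +oo] --> z -> omega_limit x = [set z].
Proof.
move=> xz; apply/seteqP; split=> [p [s s_oo xsp]|p ->].
  exact: norm_cvg_unique xsp (cvg_comp _ _ s_oo xz).
by exists (fun k => k%:R); [exact: cvgr_idn | exact: cvg_comp cvgr_idn xz].
Qed.

End Trajectories.

Lemma le_linear_of_ratio_bounded [R : realType] [h : R -> R] [M : R] :
  h 0 = 0 -> (forall r, 0 < r -> h r / r <= M) -> forall r, 0 <= r -> h r <= `|M| * r.
Proof.
move=> h0 hM r; rewrite le_eqVlt => /predU1P[<-|r0]; first by rewrite h0 mulr0.
have := hM r r0; rewrite ler_pdivrMr // => /le_trans; apply.
by apply: ler_wpM2r; [exact: ltW | exact: ler_norm].
Qed.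

Lemma differentiable_combination [R : realType] [n : nat] [V1 V2 : 'rV[R]_n -> R]
    (M : R) : (forall p, differentiable V1 p) -> (forall p, differentiable V2 p) ->
  forall p, differentiable (V2 + M *: V1) p.
Proof. by move=> dV1 dV2 p; apply: differentiableD => //; apply: differentiableZ. Qed.

Lemma derive_combination_le [R : realType] [n : nat] [f : 'rV[R]_n -> 'rV[R]_n]
    [V1 V2 N1 N2 : 'rV[R]_n -> R] [h : R -> R] [M : R] :
  (forall p, differentiable V1 p) -> (forall p, differentiable V2 p) ->
  0 <= M -> (forall r, 0 <= r -> h r <= M * r) -> (forall p, 0 <= N1 p) ->
  (forall p, 'D_(f p) V1 p <= - N1 p) -> (forall p, 'D_(f p) V2 p <= - N2 p + h (N1 p)) ->
  forall p, 'D_(f p) (V2 + M *: V1) p <= - N2 p.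
Proof.
move=> dV1 dV2 M0 hM N10 D1 D2 p.
have -> : 'D_(f p) (V2 + M *: V1) p = 'D_(f p) V2 p + M * 'D_(f p) V1 p.
  rewrite deriveD ?deriveZ //; try exact: diff_derivable.
  by apply: diff_derivable; apply: differentiableZ.
have := ler_wpM2l M0 (D1 p); have := D2 p; have := hM _ (N10 p).
rewrite mulrN; lra.
Qed.

Theorem corollary2p7 (R : realType) (n : nat) (f : 'rV[R]_n -> 'rV[R]_n)
  (V1 V2 N1 N2 : 'rV[R]_n -> R) (h : R -> R) :
  locally_lipschitz f ->
  C1 V1 -> C1 V2 ->
  continuous N1 -> continuous N2 ->
  (forall x, 0 <= N1 x) -> (forall x, 0 <= N2 x) ->
  {within `[0, +oo[, continuous h} ->
  (forall r, 0 <= r -> 0 <= h r) ->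
  h 0 = 0 ->
  (exists M : R, forall r, 0 < r -> h r / r <= M) ->
  (forall x, 'D_(f x) V1 x <= - N1 x) ->
  (forall x, 'D_(f x) V2 x <= - N2 x + h (N1 x)) ->
  (forall x0, exists x, solution f x /\ x 0 = x0) ->
  (forall x, solution f x -> exists M : R, forall t, 0 <= t -> `|x t| <= M) ->
  (forall x, solution f x ->
     unif_cont_on_half_line (fun t => N1 (x t)) /\
     unif_cont_on_half_line (fun t => N2 (x t))) ->
  [set x | N1 x = 0 /\ N2 x = 0] = equilibria f ->
  (forall z, z \in equilibria f -> lyapunov_stable f z) ->
  (forall x, solution f x ->
     exists2 z, z \in [set y | N1 y = 0 /\ N2 y = 0] &
       x t @[t --> +oo] --> z /\ omega_limit x = [set z]) /\
  (forall z, z \in equilibria f -> semistable f z).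
Proof.
(* Every claim quantifies over given solutions. *)
move=> _ [dV1 _] [dV2 _] cN1 cN2 N10 N20 _ _ h0 [M hM] D1 D2 _ bnd uc E_eq stab.
have hle := le_linear_of_ratio_bounded h0 hM.
have cvg_E : forall x, solution f x -> exists2 z, z \in [set y | N1 y = 0 /\ N2 y = 0] &
    x t @[t --> +oo] --> z /\ omega_limit x = [set z].
  move=> x sx; have [uc1 uc2] := uc x sx.
  have N1x0 := lyapunov_cvg0 dV1 D1 N10 sx (bnd x sx) uc1.
  have N2x0 := lyapunov_cvg0 (differentiable_combination `|M| dV1 dV2)
    (derive_combination_le dV1 dV2 (normr_ge0 M) hle N10 D1 D2) N20 sx (bnd x sx) uc2.
  have [z clz] := bounded_cluster (bnd x sx).
  have zE : z \in [set y | N1 y = 0 /\ N2 y = 0].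
    by apply/mem_set; split; [exact: cluster_eq0 cN1 N1x0 clz | exact: cluster_eq0 cN2 N2x0 clz].
  have xz : x t @[t --> +oo] --> z by apply: stable_cluster_cvg sx _ clz; by apply: stab; rewrite -E_eq.
  by exists z => //; split => //; exact: omega_limit_cvg.
split => // z zE; split => //; first exact: stab.
exists 1 => // x sx _; have [w wE [xw _]] := cvg_E x sx.
have wEf : w \in equilibria f by rewrite -E_eq.
by exists w => //; split => //; apply: stab.
Qed.
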